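(* (1) For fixed $x$, $\tau_*(x,t)$ and $\tau^*(x,t)$ are monotonically increasing in $t$, and for fixed $t$ they are monotonically decreasing in $x$. Moreover, for $t_1<t_2$ one has $\tau^*(x,t_1)\le\tau_*(x,t_2)$, and for $x_1<x_2$ one has $\tau_*(x_1,t)\ge\tau^*(x_2,t)$. (2) For fixed $t$, $y_*(x,t)$ and $y^*(x,t)$ are monotonically increasing in $x$, and for $x_1<x_2$ one has $y^*(x_1,t)\le y_*(x_2,t)$. (3) $\tau_*(0,t)=\tau^*(0,t)=t$. (4) $y_*$ is lower semicontinuous and $y^*$ is upper semicontinuous (as functions of $(x,t)$). (5) $\tau_*$ is lower semicontinuous and $\tau^*$ is upper semicontinuous.
   Context: Standing assumptions: $u_0,u_b:[0,\infty)\to\mathbb{R}$ bounded measurable with $u_b>0$; $\rho_0,\rho_b:[0,\infty)\to(0,\infty)$ positive locally bounded measurable. For $x,t,y,\tau\ge0$: $F(y,x,t)=\int_0^y[tu_0(\eta)+\eta-x]\rho_0(\eta)\,d\eta$, $G(\tau,x,t)=\int_0^\tau[x-u_b(\eta)(t-\eta)]\rho_b(\eta)u_b(\eta)\,d\eta$. The minima $\min_{y\ge0}F(y,x,t)$ and $\min_{\tau\ge0}G(\tau,x,t)$ are attained; $y_*(x,t)$, $y^*(x,t)$ denote the smallest and largest minimizers of $y\mapsto F(y,x,t)$, and $\tau_*(x,t)$, $\tau^*(x,t)$ the smallest and largest minimizers of $\tau\mapsto G(\tau,x,t)$. *)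

From HB Require Import structures.
From mathcomp Require Import all_boot all_order all_algebra.
From mathcomp Require Import all_classical all_reals all_analysis.
Set Implicit Arguments. Unset Strict Implicit. Unset Printing Implicit Defensive.
Import Order.TTheory GRing.Theory Num.Theory.
Import numFieldNormedType.Exports.
Local Open Scope classical_set_scope.
Local Open Scope ring_scope.

Section Defs.
Variable R : realType.

Definition Ffun (u0 rho0 : R -> R) (y x t : R) : R :=
  \int[@lebesgue_measure R]_(eta in `[0, y]) ((t * u0 eta + eta - x) * rho0 eta).

Definition Gfun (ub rhob : R -> R) (tau x t : R) : R :=
  \int[@lebesgue_measure R]_(eta in `[0, tau])
     ((x - ub eta * (t - eta)) * rhob eta * ub eta).

Definition argmin0 (phi : R -> R) : set R :=
  [set y | 0 <= y /\ forall z, 0 <= z -> phi y <= phi z].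

Definition y_low u0 rho0 x t : R := inf (argmin0 (fun y => Ffun u0 rho0 y x t)).
Definition y_up  u0 rho0 x t : R := sup (argmin0 (fun y => Ffun u0 rho0 y x t)).
Definition tau_low ub rhob x t : R := inf (argmin0 (fun tau => Gfun ub rhob tau x t)).
Definition tau_up  ub rhob x t : R := sup (argmin0 (fun tau => Gfun ub rhob tau x t)).

Definition quad : set (R * R) := [set p | 0 <= p.1 /\ 0 <= p.2].

Definition lsc_on (D : set (R * R)) (f : R * R -> R) :=
  forall p, D p -> forall a, a < f p -> \forall q \near p, D q -> a < f q.
Definition usc_on (D : set (R * R)) (f : R * R -> R) :=
  forall p, D p -> forall a, f p < a -> \forall q \near p, D q -> f q < a.

End Defs.

From HB Require Import structures.
From mathcomp Require Import all_boot all_order all_algebra.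
From mathcomp Require Import all_classical all_reals all_analysis.
From mathcomp Require Import ring lra.
Import Order.TTheory GRing.Theory Num.Theory.
Import numFieldNormedType.Exports.
Local Open Scope classical_set_scope.
Local Open Scope ring_scope.

(* F and G are affine in the parameters (x, t), with coefficients that are
   primitives of functions of constant sign.  Increasing x subtracts from F a
   positive multiple of the strictly increasing y |-> \int_0^y rho0, which can
   only push minimizers to the right; in G, increasing x pushes them to the
   left and increasing t to the right.  For x = 0 the integrand of G is
   negative on [0, t) and positive after t, so t is the unique minimizer.
   Semicontinuity: if Phi(., x, t) has no minimizer in a compact [a, b], its
   minimum over [a, b] exceeds the global minimum by some d > 0; as Phi is
   Lipschitz in (x, t) uniformly for bounded y, this persists for nearby
   parameters.  Taking [a, b] = [0, inf - e], and [sup + e, B] for a locally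
   uniform bound B on the minimizers, gives the lower semicontinuity of the
   smallest and the upper semicontinuity of the largest minimizer. *)

Section ArgminOrder.
Context {R : realType}.
Implicit Types (f h : R -> R) (S : set R).

Lemma le_inf_sup S1 S2 : S1 !=set0 -> S2 !=set0 ->
  has_lbound S1 -> has_ubound S2 -> (forall a b, S1 a -> S2 b -> a <= b) ->
  [/\ inf S1 <= inf S2, sup S1 <= sup S2 & sup S1 <= inf S2].
Proof.
move=> [a1 S1a1] [a2 S2a2] lb1 ub2 le12.
have ub1 : has_ubound S1 by exists a2 => a S1a; exact: le12 S1a S2a2.
have lb2 : has_lbound S2 by exists a1 => b S2b; exact: le12 S1a1 S2b.
have sup_le_inf : sup S1 <= inf S2.
  apply: lb_le_inf; first by exists a2.
  move=> b S2b; apply: ge_sup; first by exists a1.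
  by move=> a S1a; exact: le12 S1a S2b.
split => //.
- exact: le_trans (le_trans (ge_inf lb1 S1a1) (ub_le_sup ub1 S1a1)) sup_le_inf.
- exact: le_trans sup_le_inf (le_trans (ge_inf lb2 S2a2) (ub_le_sup ub2 S2a2)).
Qed.

Lemma argmin0_le_sub f1 f2 h c a b : 0 < c ->
  (forall y, 0 <= y -> f2 y = f1 y - c * h y) ->
  (forall y z, 0 <= y -> y < z -> h y < h z) ->
  argmin0 f1 a -> argmin0 f2 b -> a <= b.
Proof.
move=> c0 f2E h_incr [a0 min_a] [b0 min_b]; rewrite leNgt; apply/negP => ba.
have := min_a b b0; have := min_b a a0; rewrite !f2E //.
have : c * h b < c * h a by rewrite ltr_pM2l // h_incr.
lra.
Qed.

Lemma argmin0_inf_sup_le_sub f1 f2 h c : 0 < c ->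
  (forall y, 0 <= y -> f2 y = f1 y - c * h y) ->
  (forall y z, 0 <= y -> y < z -> h y < h z) ->
  argmin0 f1 !=set0 -> argmin0 f2 !=set0 -> has_ubound (argmin0 f2) ->
  [/\ inf (argmin0 f1) <= inf (argmin0 f2),
      sup (argmin0 f1) <= sup (argmin0 f2)
    & sup (argmin0 f1) <= inf (argmin0 f2)].
Proof.
move=> c0 f2E h_incr ne1 ne2 ub2; apply: le_inf_sup => //.
  by exists 0 => y [].
by move=> a b; apply: argmin0_le_sub f2E h_incr.
Qed.

End ArgminOrder.

Lemma near_dist_lt {R : realType} (p : R * R) {e : R} : 0 < e ->
  \forall q \near p, `|q.1 - p.1| < e /\ `|q.2 - p.2| < e.
Proof.
move=> e0; apply: filterS (nbhsx_ballx p e e0) => q [/= d1 d2].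
by rewrite distrC (distrC q.2).
Qed.

Lemma lipschitz_of_affine {R : realType}
    {Phi : R -> R -> R -> R} {a b c : R -> R} :
  (forall y x t, Phi y x t = c y + x * a y + t * b y) ->
  (forall L, exists K, forall y, 0 <= y <= L -> `|a y| <= K) ->
  (forall L, exists K, forall y, 0 <= y <= L -> `|b y| <= K) ->
  forall x t L, exists2 K, 0 < K & forall x' t' y, 0 <= y <= L ->
    `|Phi y x' t' - Phi y x t| <= K * (`|x' - x| + `|t' - t|).
Proof.
move=> PhiE a_bdd b_bdd x t L.
have [Ka a_le] := a_bdd L; have [Kb b_le] := b_bdd L.
exists (`|Ka| + `|Kb| + 1) => [|x' t' y yL]; first by rewrite ltr_wpDl.
have -> : Phi y x' t' - Phi y x t = (x' - x) * a y + (t' - t) * b y.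
  by rewrite !PhiE; ring.
apply: le_trans (ler_normD _ _) _; rewrite !normrM.
have ay := le_trans (a_le y yL) (ler_norm Ka).
have by_ := le_trans (b_le y yL) (ler_norm Kb).
have := normr_ge0 (x' - x); have := normr_ge0 (t' - t).
have := normr_ge0 (a y); have := normr_ge0 (b y).
nra.
Qed.

Section ArgminSemicontinuity.
Context {R : realType} {Phi : R -> R -> R -> R}.
Hypothesis Phi_argmin_ne : forall {x t}, 0 <= x -> 0 <= t ->
  argmin0 (fun y => Phi y x t) !=set0.
Hypothesis Phi_cont : forall x t {b}, 0 <= b ->
  {within `[0, b], continuous (fun y => Phi y x t)}.
Hypothesis Phi_lip : forall x t L, exists2 K, 0 < K & forall x' t' y,
  0 <= y <= L -> `|Phi y x' t' - Phi y x t| <= K * (`|x' - x| + `|t' - t|).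

Lemma near_argmin0_notin {x t a b} : 0 <= x -> 0 <= t -> 0 <= a -> a <= b ->
  (forall y, a <= y <= b -> ~ argmin0 (fun y => Phi y x t) y) ->
  \forall q \near (x, t), forall y, a <= y <= b ->
    ~ argmin0 (fun y => Phi y q.1 q.2) y.
Proof.
move=> x0 t0 a0 ab no_min.
have [y0 [y00 min_y0]] := Phi_argmin_ne x0 t0.
have Phi_cont_ab : {within `[a, b], continuous (fun y => Phi y x t)}.
  apply: continuous_subspaceW (Phi_cont x t (le_trans a0 ab)).
  by apply: subset_itvr; rewrite bnd_simp.
have [c /[!in_itv] /= /andP[ac cb] c_min] := EVT_min ab Phi_cont_ab.
have gap : Phi y0 x t < Phi c x t.
  rewrite ltNge; apply/negP => c_le; apply: (no_min c); first by rewrite ac cb.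
  split; first exact: le_trans ac.
  by move=> z z0; exact: le_trans c_le (min_y0 z z0).
set d := Phi c x t - Phi y0 x t.
have [K K0 lipK] := Phi_lip x t (Order.max b y0).
have e0 : 0 < d / (4 * K) by rewrite divr_gt0 ?subr_gt0 // mulr_gt0.
apply: filterS (near_dist_lt (x, t) e0).
move=> q [/= dx dt] y /andP[ay yb] [_ min_y].
have yL : 0 <= y <= Order.max b y0 by rewrite (le_trans a0 ay) le_max yb.
have y0L : 0 <= y0 <= Order.max b y0 by rewrite y00 le_max lexx orbT.
have small : K * (`|q.1 - x| + `|q.2 - t|) < d / 2.
  have -> : d / 2 = K * (2 * (d / (4 * K))) by field; rewrite gt_eqF.
  by rewrite ltr_pM2l //; lra.
have := le_lt_trans (lipK q.1 q.2 y yL) small.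
have := le_lt_trans (lipK q.1 q.2 y0 y0L) small.
have := c_min y; rewrite in_itv /= ay yb => /(_ isT).
have := min_y y0 y00.
rewrite !ltr_norml /d; lra.
Qed.

Lemma lsc_inf_argmin0 :
  lsc_on (@quad R) (fun p => inf (argmin0 (fun y => Phi y p.1 p.2))).
Proof.
move=> [x t] /= [x0 t0] a a_lt.
set S := argmin0 _ in a_lt.
have inf_ge0 q : quad q -> 0 <= inf (argmin0 (fun y => Phi y q.1 q.2)).
  by case=> q1 q2; apply: lb_le_inf (Phi_argmin_ne q1 q2) _ => y [].
have [a_neg|a_ge0] := ltP a 0.
  by apply: filterE => q /inf_ge0; exact: lt_le_trans a_neg.
have m0 : 0 <= (a + inf S) / 2 by lra.
apply: filterS (near_argmin0_notin x0 t0 (lexx 0) m0 _) => [q avoid [q1 q2]|].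
  apply: (@lt_le_trans _ _ ((a + inf S) / 2)); first lra.
  apply: lb_le_inf (Phi_argmin_ne q1 q2) _ => y min_y.
  rewrite leNgt; apply/negP => ym; apply: (avoid y) => //.
  by rewrite (ltW ym) andbT; case: min_y.
move=> y /andP[_ ym] min_y.
have lbS : has_lbound S by exists 0 => z [].
have := ge_inf lbS min_y; lra.
Qed.

Hypothesis Phi_argmin_bdd : forall {x t}, 0 <= x -> 0 <= t -> exists B,
  forall x' t', 0 <= x' -> 0 <= t' -> `|x' - x| < 1 -> `|t' - t| < 1 ->
  forall y, argmin0 (fun y => Phi y x' t') y -> y <= B.

Lemma usc_sup_argmin0 :
  usc_on (@quad R) (fun p => sup (argmin0 (fun y => Phi y p.1 p.2))).
Proof.
move=> [x t] /= [x0 t0] a lt_a.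
set S := argmin0 _ in lt_a.
have [B le_B] := Phi_argmin_bdd x0 t0.
have ubS : has_ubound S.
  by exists B => y; apply: le_B => //; rewrite subrr normr0 ltr01.
have [y0 Sy0] := Phi_argmin_ne x0 t0.
have sup_ge0 : 0 <= sup S by apply: le_trans (ub_le_sup ubS Sy0); case: Sy0.
set m := (sup S + a) / 2.
have m0 : 0 <= m by rewrite /m; lra.
have mB : m <= Order.max B m by rewrite le_max lexx orbT.
apply: filterS2 (near_argmin0_notin x0 t0 m0 mB _) (near_dist_lt (x, t) ltr01)
  => [q avoid /= [dx dt] [q1 q2]|].
  apply: (@le_lt_trans _ _ m); last by rewrite /m; lra.
  apply: ge_sup (Phi_argmin_ne q1 q2) _ => y min_y.
  rewrite leNgt; apply/negP => my; apply: (avoid y) => //.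
  by rewrite (ltW my) le_max (le_B q.1 q.2).
move=> y /andP[my _] min_y.
have := ub_le_sup ubS min_y; rewrite /m in my; lra.
Qed.

End ArgminSemicontinuity.

Section LocallyBoundedMeasurable.
Context {R : realType}.
Notation mu := (@lebesgue_measure R).
Implicit Types (f g : R -> R).

Definition locbdd_mfun f := measurable_fun (`[0%R, +oo[ : set R) f /\
  forall L, exists K, forall y, 0 <= y <= L -> `|f y| <= K.

Lemma locbdd_mfun_cst c : locbdd_mfun (fun _ => c).
Proof. by split; [exact: measurable_cst | exists `|c|]. Qed.

Lemma locbdd_mfun_id : locbdd_mfun id.
Proof.
split; first exact: measurable_id.
by move=> L; exists L => y /andP[y0 yL]; rewrite ger0_norm.
Qed.

Lemma locbdd_mfunD {f g} : locbdd_mfun f -> locbdd_mfun g ->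
  locbdd_mfun (fun y => f y + g y).
Proof.
move=> [mf bf] [mg bg]; split; first exact: measurable_realfun.measurable_funD.
move=> L; have [Kf lef] := bf L; have [Kg leg] := bg L.
exists (Kf + Kg) => y yL; apply: le_trans (ler_normD _ _) _.
by rewrite lerD ?lef ?leg.
Qed.

Lemma locbdd_mfunN {f} : locbdd_mfun f -> locbdd_mfun (fun y => - f y).
Proof.
move=> [mf bf]; split; first exact: measurable_realfun.measurable_funN.
by move=> L; have [K le] := bf L; exists K => y; rewrite normrN; exact: le.
Qed.

Lemma locbdd_mfunM {f g} : locbdd_mfun f -> locbdd_mfun g ->
  locbdd_mfun (fun y => f y * g y).
Proof.
move=> [mf bf] [mg bg]; split; first exact: measurable_realfun.measurable_funM.
move=> L; have [Kf lef] := bf L; have [Kg leg] := bg L.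
exists (Kf * Kg) => y yL; rewrite normrM.
by apply: ler_pM => //; [exact: lef | exact: leg].
Qed.

Lemma locbdd_mfun_integrable {f} {D : set R} {L : R} : locbdd_mfun f ->
  measurable D -> D `<=` `[0, L] -> mu.-integrable D (EFin \o f).
Proof.
move=> [mf bf] mD DL; apply: measurable_bounded_integrable => //.
- apply: (@le_lt_trans _ _ (mu `[0, L])); first by rewrite le_measure ?inE.
  by rewrite lebesgue_measure_itv /=; case: ifP => _; rewrite ?ltry.
- apply: measurable_funS mf => // y /DL.
  by rewrite /= !in_itv /= => /andP[-> _].
- have [K le_K] := bf L; exists K; split; first exact: num_real.
  move=> M KM y /DL; rewrite /= in_itv /= => yL.
  exact: le_trans (le_K y yL) (ltW KM).
Qed.

Lemma locbdd_mfun_bounded {f} : measurable_fun (`[0%R, +oo[ : set R) f ->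
  (exists M, forall y, 0 <= y -> `|f y| <= M) -> locbdd_mfun f.
Proof.
by move=> mf [M le_M]; split=> // L; exists M => y /andP[y0 _]; exact: le_M.
Qed.

Lemma locbdd_mfun_pos {f} : measurable_fun (`[0%R, +oo[ : set R) f ->
  (forall y, 0 <= y -> 0 < f y) ->
  (forall L, exists C, forall y, 0 <= y <= L -> f y <= C) -> locbdd_mfun f.
Proof.
move=> mf f_gt0 f_bdd; split=> // L; have [C le_C] := f_bdd L.
by exists C => y yL; rewrite ger0_norm ?le_C // ltW // f_gt0 //; case/andP: yL.
Qed.

Definition primitive g y := \int[mu]_(e in `[0, y]) g e.

Lemma primitive_integrable {g y} : locbdd_mfun g ->
  mu.-integrable `[0, y] (EFin \o g).
Proof. by move=> lg; apply: (locbdd_mfun_integrable (L := y) lg). Qed.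

Lemma primitiveD g1 g2 y : locbdd_mfun g1 -> locbdd_mfun g2 ->
  primitive (fun e => g1 e + g2 e) y = primitive g1 y + primitive g2 y.
Proof.
by move=> l1 l2; rewrite /primitive RintegralD // primitive_integrable.
Qed.

Lemma primitiveZl c g y : locbdd_mfun g ->
  primitive (fun e => c * g e) y = c * primitive g y.
Proof.
by move=> lg; rewrite /primitive RintegralZl // primitive_integrable.
Qed.

Lemma primitiveN g y : locbdd_mfun g ->
  primitive (fun e => - g e) y = - primitive g y.
Proof.
move=> lg; rewrite -mulN1r -primitiveZl //.
by apply: eq_Rintegral => e _; rewrite mulN1r.
Qed.

Lemma primitive_cont g b : locbdd_mfun g -> 0 <= b ->
  {within `[0, b], continuous (primitive g)}.
Proof.
move=> lg b0; apply: parameterized_integral_continuous => //.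
exact: primitive_integrable.
Qed.

Lemma primitive_bdd {g} L : locbdd_mfun g ->
  exists K, forall y, 0 <= y <= L -> `|primitive g y| <= K.
Proof.
move=> lg; have [_ /(_ L) [K le_K]] := lg.
exists (`|K| * `|L|) => y /andP[y0 yL].
have sub_y : `[0, y] `<=` `[0, L] by apply: subset_itvl; rewrite bnd_simp.
apply: le_trans (le_normr_Rintegral _ (primitive_integrable lg)) _ => //.
apply: le_trans (_ : \int[mu]_(e in `[0, y]) `|K| <= _).
  apply: le_Rintegral => //.
  - exact: integrable_norm (primitive_integrable lg).
  - exact: primitive_integrable (locbdd_mfun_cst _).
  - move=> e /sub_y; rewrite /= in_itv /= => eL.
    exact: le_trans (le_K e eL) (ler_norm K).
have mu_y : fine (mu `[0, y]) = y.
  rewrite lebesgue_measure_itv /=.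
  case: ifPn => [_|]; first by rewrite oppr0 adde0.
  by rewrite -leNgt lee_fin => y_le0; apply/eqP; rewrite eq_le y0 y_le0.
rewrite Rintegral_cst // mu_y ler_wpM2l //.
exact: le_trans yL (ler_norm L).
Qed.

Lemma Rintegral_itv_gt0 g y z : locbdd_mfun g -> 0 <= y -> y < z ->
  (forall e, y < e <= z -> 0 < g e) -> 0 < \int[mu]_(e in `]y, z]) g e.
Proof.
move=> lg y0 yz g_gt0.
have sub_z : `]y, z] `<=` `[0, z].
  move=> e; rewrite /= !in_itv /= => /andP[ye ez].
  by rewrite ez (le_trans y0 (ltW ye)).
have ig := locbdd_mfun_integrable lg (measurable_itv _) sub_z.
rewrite lt_neqAle Rintegral_ge0 ?andbT; last first.
  by move=> e; rewrite /= in_itv /= => /g_gt0/ltW.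
apply/negP => /eqP; rewrite /Rintegral => int0.
have fin_int : (\int[mu]_(e in `]y, z]) (g e)%:E)%E \is a fin_num.
  exact: integrable_fin_num ig.
have abs_int0 : (\int[mu]_(e in `]y, z]) `|(g e)%:E| = 0)%E.
  rewrite -[RHS](_ : (\int[mu]_(e in `]y, z]) (g e)%:E)%E = 0)%E; last first.
    by rewrite -(fineK fin_int) -int0.
  apply: eq_integral => e; rewrite inE /= in_itv /= => /g_gt0 ge0.
  by rewrite ger0_norm // ltW.
have [mg _] := integrableP _ _ _ ig.
have [N [mN N0 sub_N]] :=
  (ae_eq_integral_abs mu (measurable_itv _) mg).1 abs_int0.
have : (mu `]y, z] <= mu N)%E.
  apply: le_measure; rewrite ?inE // => e yez; apply: sub_N => /= /(_ yez) /eqP.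
  by rewrite gt_eqF //; apply: g_gt0; move: yez; rewrite /= in_itv.
by rewrite N0 lebesgue_measure_itv /= lte_fin yz lee_fin subr_le0 leNgt yz.
Qed.

Lemma primitive_lt g y z : locbdd_mfun g -> 0 <= y -> y < z ->
  (forall e, y < e <= z -> 0 < g e) -> primitive g y < primitive g z.
Proof.
move=> lg y0 yz g_gt0; rewrite -subr_gt0 /primitive Rintegral_itvB ?bnd_simp //.
- exact: Rintegral_itv_gt0.
- exact: primitive_integrable.
- exact: ltW.
Qed.

Lemma primitive_incr g : locbdd_mfun g ->
  (forall e, 0 < e -> 0 < g e) ->
  forall y z, 0 <= y -> y < z -> primitive g y < primitive g z.
Proof.
move=> lg g_gt0 y z y0 yz; apply: primitive_lt => // e /andP[ye _].
exact/g_gt0/(le_lt_trans y0 ye).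
Qed.

Lemma primitive_gt g y z : locbdd_mfun g -> 0 <= y -> y < z ->
  (forall e, y < e <= z -> g e < 0) -> primitive g z < primitive g y.
Proof.
move=> lg y0 yz g_lt0; rewrite -ltrN2 -!primitiveN //.
by apply: primitive_lt (locbdd_mfunN lg) y0 yz _ => e /g_lt0; rewrite oppr_gt0.
Qed.

Lemma argmin0_primitive_le g Y y : locbdd_mfun g -> 0 <= Y ->
  (forall e, Y < e -> 0 < g e) -> argmin0 (primitive g) y -> y <= Y.
Proof.
move=> lg Y0 g_gt0 [_ min_y]; rewrite leNgt; apply/negP => Yy.
have := min_y Y Y0; apply/negP; rewrite -ltNge.
by apply: primitive_lt => // e /andP[Ye _]; exact: g_gt0.
Qed.

Lemma argmin0_primitive_ge g Y y : locbdd_mfun g ->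
  (forall e, 0 <= e < Y -> g e < 0) -> argmin0 (primitive g) y -> Y <= y.
Proof.
move=> lg g_lt0 [y0 min_y]; rewrite leNgt; apply/negP => yY.
have m0 : 0 <= (y + Y) / 2 by lra.
have := min_y _ m0; apply/negP; rewrite -ltNge.
apply: primitive_gt => //; first lra.
by move=> e /andP[ye em]; apply: g_lt0; apply/andP; split; lra.
Qed.

End LocallyBoundedMeasurable.

Ltac solve_locbdd_mfun := repeat first
  [ assumption | exact: locbdd_mfun_cst | exact: locbdd_mfun_id
  | apply: locbdd_mfunN | apply: locbdd_mfunD
  | apply: locbdd_mfunM ].

Section Minimizers.
Context {R : realType} {u0 ub rho0 rhob : R -> R} {Mu : R}.
Hypotheses (u0_lbm : locbdd_mfun u0) (ub_lbm : locbdd_mfun ub)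
  (rho0_lbm : locbdd_mfun rho0) (rhob_lbm : locbdd_mfun rhob).
Hypothesis u0_le : forall {e}, 0 <= e -> `|u0 e| <= Mu.
Hypothesis ub_gt0 : forall e, 0 <= e -> 0 < ub e.
Hypothesis rho0_gt0 : forall e, 0 <= e -> 0 < rho0 e.
Hypothesis rhob_gt0 : forall e, 0 <= e -> 0 < rhob e.
Hypothesis F_argmin_ne : forall {x t}, 0 <= x -> 0 <= t ->
  argmin0 (fun y => Ffun u0 rho0 y x t) !=set0.
Hypothesis G_argmin_ne : forall {x t}, 0 <= x -> 0 <= t ->
  argmin0 (fun y => Gfun ub rhob y x t) !=set0.

Let Mu_ge0 : 0 <= Mu := le_trans (normr_ge0 _) (u0_le (lexx 0)).

Lemma Ffun_affine y x t : Ffun u0 rho0 y x t =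
  primitive (fun e => e * rho0 e) y + x * primitive (fun e => - rho0 e) y
  + t * primitive (fun e => u0 e * rho0 e) y.
Proof.
rewrite -!primitiveZl -?primitiveD; try solve_locbdd_mfun.
by apply: eq_Rintegral => e _; ring.
Qed.

Lemma Gfun_affine y x t : Gfun ub rhob y x t =
  primitive (fun e => e * (ub e * ub e * rhob e)) y
  + x * primitive (fun e => rhob e * ub e) y
  + t * primitive (fun e => - (ub e * ub e * rhob e)) y.
Proof.
rewrite -!primitiveZl -?primitiveD; try solve_locbdd_mfun.
by apply: eq_Rintegral => e _; ring.
Qed.

Lemma argminF_le {x t y} : 0 <= x -> 0 <= t ->
  argmin0 (fun y => Ffun u0 rho0 y x t) y -> y <= x + t * Mu.
Proof.
move=> x0 t0.
apply: (@argmin0_primitive_le _ (fun e => (t * u0 e + e - x) * rho0 e)).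
- by solve_locbdd_mfun.
- by rewrite addr_ge0 ?mulr_ge0.
move=> e lt_e.
have e0 : 0 <= e by apply: le_trans (ltW lt_e); rewrite addr_ge0 ?mulr_ge0.
rewrite mulr_gt0 ?rho0_gt0 //.
have := u0_le e0; rewrite ler_norml => /andP[u0_ge _].
have : t * - Mu <= t * u0 e by rewrite ler_wpM2l.
lra.
Qed.

Lemma argminG_le {x t y} : 0 <= x -> 0 <= t ->
  argmin0 (fun y => Gfun ub rhob y x t) y -> y <= t.
Proof.
move=> x0 t0.
apply: (@argmin0_primitive_le _
  (fun e => (x - ub e * (t - e)) * rhob e * ub e)) => //.
- by solve_locbdd_mfun.
move=> e lt_e; have e0 : 0 <= e by apply: le_trans (ltW lt_e).
rewrite !mulr_gt0 ?rhob_gt0 ?ub_gt0 //.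
have : 0 < ub e * (e - t) by rewrite mulr_gt0 ?ub_gt0 ?subr_gt0.
lra.
Qed.

Lemma argminG0 t : 0 <= t -> argmin0 (fun y => Gfun ub rhob y 0 t) = [set t].
Proof.
move=> t0.
have tE y : argmin0 (fun y => Gfun ub rhob y 0 t) y -> y = t.
  move=> min_y; apply/eqP; rewrite eq_le (argminG_le (lexx 0) t0 min_y) /=.
  apply: (@argmin0_primitive_ge _
    (fun e => (0 - ub e * (t - e)) * rhob e * ub e)) min_y.
    by solve_locbdd_mfun.
  move=> e /andP[e0 lt_e]; rewrite add0r !mulNr oppr_lt0.
  by rewrite !mulr_gt0 ?ub_gt0 ?rhob_gt0 ?subr_gt0.
apply/seteqP; split => [y /tE -> //|_ ->].
have [z min_z] := G_argmin_ne (lexx 0) t0.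
by move: (min_z); rewrite (tE z min_z).
Qed.

Lemma y_mono_x t x1 x2 : 0 <= t -> 0 <= x1 -> x1 < x2 ->
  [/\ y_low u0 rho0 x1 t <= y_low u0 rho0 x2 t,
      y_up u0 rho0 x1 t <= y_up u0 rho0 x2 t
    & y_up u0 rho0 x1 t <= y_low u0 rho0 x2 t].
Proof.
move=> t0 x10 x12; have x20 := le_trans x10 (ltW x12).
apply: (@argmin0_inf_sup_le_sub _ _ _ (primitive rho0) (x2 - x1)).
- by rewrite subr_gt0.
- by move=> y _; rewrite !Ffun_affine primitiveN //; ring.
- by apply: primitive_incr => // e /ltW; exact: rho0_gt0.
- exact: F_argmin_ne.
- exact: F_argmin_ne.
- by exists (x2 + t * Mu) => y; exact: argminF_le.
Qed.

Lemma tau_mono_x t x1 x2 : 0 <= t -> 0 <= x1 -> x1 < x2 ->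
  [/\ tau_low ub rhob x2 t <= tau_low ub rhob x1 t,
      tau_up ub rhob x2 t <= tau_up ub rhob x1 t
    & tau_up ub rhob x2 t <= tau_low ub rhob x1 t].
Proof.
move=> t0 x10 x12; have x20 := le_trans x10 (ltW x12).
apply: (@argmin0_inf_sup_le_sub _ _ _
  (primitive (fun e => rhob e * ub e)) (x2 - x1)).
- by rewrite subr_gt0.
- by move=> y _; rewrite !Gfun_affine; ring.
- apply: primitive_incr; first by solve_locbdd_mfun.
  by move=> e /ltW e0; rewrite mulr_gt0 ?rhob_gt0 ?ub_gt0.
- exact: G_argmin_ne.
- exact: G_argmin_ne.
- by exists t => y; exact: argminG_le.
Qed.

Lemma tau_mono_t x t1 t2 : 0 <= x -> 0 <= t1 -> t1 < t2 ->
  [/\ tau_low ub rhob x t1 <= tau_low ub rhob x t2,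
      tau_up ub rhob x t1 <= tau_up ub rhob x t2
    & tau_up ub rhob x t1 <= tau_low ub rhob x t2].
Proof.
move=> x0 t10 t12; have t20 := le_trans t10 (ltW t12).
apply: (@argmin0_inf_sup_le_sub _ _ _
  (primitive (fun e => ub e * ub e * rhob e)) (t2 - t1)).
- by rewrite subr_gt0.
- by move=> y _; rewrite !Gfun_affine primitiveN //; [ring | solve_locbdd_mfun].
- apply: primitive_incr; first by solve_locbdd_mfun.
  by move=> e /ltW e0; rewrite !mulr_gt0 ?rhob_gt0 ?ub_gt0.
- exact: G_argmin_ne.
- exact: G_argmin_ne.
- by exists t2 => y; exact: argminG_le.
Qed.

Let F_cont x t b : 0 <= b ->
  {within `[0, b], continuous (fun y => Ffun u0 rho0 y x t)}.
Proof.
apply: (@primitive_cont _ (fun e => (t * u0 e + e - x) * rho0 e)).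
by solve_locbdd_mfun.
Qed.

Let G_cont x t b : 0 <= b ->
  {within `[0, b], continuous (fun y => Gfun ub rhob y x t)}.
Proof.
apply: (@primitive_cont _ (fun e => (x - ub e * (t - e)) * rhob e * ub e)).
by solve_locbdd_mfun.
Qed.

Let F_lip := lipschitz_of_affine Ffun_affine
  (fun L => primitive_bdd L (locbdd_mfunN rho0_lbm))
  (fun L => primitive_bdd L (locbdd_mfunM u0_lbm rho0_lbm)).

Let G_lip := lipschitz_of_affine Gfun_affine
  (fun L => primitive_bdd L (locbdd_mfunM rhob_lbm ub_lbm))
  (fun L => primitive_bdd L
     (locbdd_mfunN (locbdd_mfunM (locbdd_mfunM ub_lbm ub_lbm) rhob_lbm))).

Lemma y_low_lsc : lsc_on (@quad R) (fun p => y_low u0 rho0 p.1 p.2).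
Proof. exact: (lsc_inf_argmin0 (@F_argmin_ne) F_cont F_lip). Qed.

Lemma y_up_usc : usc_on (@quad R) (fun p => y_up u0 rho0 p.1 p.2).
Proof.
apply: (usc_sup_argmin0 (@F_argmin_ne) F_cont F_lip) => x t x0 t0.
exists (x + 1 + (t + 1) * Mu) => x' t' x'0 t'0 dx dt y /(argminF_le x'0 t'0).
move: dx dt; rewrite !ltr_norml => /andP[_ dx] /andP[_ dt] le_y.
have : t' * Mu <= (t + 1) * Mu by rewrite ler_wpM2r //; lra.
lra.
Qed.

Lemma tau_low_lsc : lsc_on (@quad R) (fun p => tau_low ub rhob p.1 p.2).
Proof. exact: (lsc_inf_argmin0 (@G_argmin_ne) G_cont G_lip). Qed.

Lemma tau_up_usc : usc_on (@quad R) (fun p => tau_up ub rhob p.1 p.2).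
Proof.
apply: (usc_sup_argmin0 (@G_argmin_ne) G_cont G_lip) => x t x0 t0.
exists (t + 1) => x' t' x'0 t'0 _ dt y /(argminG_le x'0 t'0).
by move: dt; rewrite ltr_norml => /andP[_ dt]; lra.
Qed.

End Minimizers.
Theorem lemma2p1 (R : realType) (u0 ub rho0 rhob : R -> R)
  (* u0, ub bounded measurable on [0,oo), ub > 0 *)
  (hu0m : measurable_fun (`[0%R, +oo[ : set R) u0)
  (hu0b : exists M : R, forall eta, 0 <= eta -> `|u0 eta| <= M)
  (hubm : measurable_fun (`[0%R, +oo[ : set R) ub)
  (hubb : exists M : R, forall eta, 0 <= eta -> `|ub eta| <= M)
  (hubp : forall eta, 0 <= eta -> 0 < ub eta)
  (* rho0, rhob positive, locally bounded, measurable on [0,oo) *)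
  (hr0m : measurable_fun (`[0%R, +oo[ : set R) rho0)
  (hr0p : forall eta, 0 <= eta -> 0 < rho0 eta)
  (hr0b : forall L, exists C : R, forall eta, 0 <= eta <= L -> rho0 eta <= C)
  (hrbm : measurable_fun (`[0%R, +oo[ : set R) rhob)
  (hrbp : forall eta, 0 <= eta -> 0 < rhob eta)
  (hrbb : forall L, exists C : R, forall eta, 0 <= eta <= L -> rhob eta <= C)
  (* the minima are attained *)
  (hFmin : forall x t, 0 <= x -> 0 <= t ->
     exists y, argmin0 (fun y => Ffun u0 rho0 y x t) y)
  (hGmin : forall x t, 0 <= x -> 0 <= t ->
     exists tau, argmin0 (fun tau => Gfun ub rhob tau x t) tau) :
  (* (1) *)
  (forall x t1 t2, 0 <= x -> 0 <= t1 -> t1 <= t2 ->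
     tau_low ub rhob x t1 <= tau_low ub rhob x t2 /\
     tau_up ub rhob x t1 <= tau_up ub rhob x t2) /\
  (forall t x1 x2, 0 <= t -> 0 <= x1 -> x1 <= x2 ->
     tau_low ub rhob x2 t <= tau_low ub rhob x1 t /\
     tau_up ub rhob x2 t <= tau_up ub rhob x1 t) /\
  (forall x t1 t2, 0 <= x -> 0 <= t1 -> t1 < t2 ->
     tau_up ub rhob x t1 <= tau_low ub rhob x t2) /\
  (forall t x1 x2, 0 <= t -> 0 <= x1 -> x1 < x2 ->
     tau_up ub rhob x2 t <= tau_low ub rhob x1 t) /\
  (* (2) *)
  (forall t x1 x2, 0 <= t -> 0 <= x1 -> x1 <= x2 ->
     y_low u0 rho0 x1 t <= y_low u0 rho0 x2 t /\
     y_up u0 rho0 x1 t <= y_up u0 rho0 x2 t) /\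
  (forall t x1 x2, 0 <= t -> 0 <= x1 -> x1 < x2 ->
     y_up u0 rho0 x1 t <= y_low u0 rho0 x2 t) /\
  (* (3) *)
  (forall t, 0 <= t -> tau_low ub rhob 0 t = t /\ tau_up ub rhob 0 t = t) /\
  (* (4) *)
  lsc_on (@quad R) (fun p => y_low u0 rho0 p.1 p.2) /\
  usc_on (@quad R) (fun p => y_up u0 rho0 p.1 p.2) /\
  (* (5) *)
  lsc_on (@quad R) (fun p => tau_low ub rhob p.1 p.2) /\
  usc_on (@quad R) (fun p => tau_up ub rhob p.1 p.2).
Proof.
have [Mu u0_le] := hu0b.
have u0_lbm := locbdd_mfun_bounded hu0m hu0b.
have ub_lbm := locbdd_mfun_bounded hubm hubb.
have rho0_lbm := locbdd_mfun_pos hr0m hr0p hr0b.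
have rhob_lbm := locbdd_mfun_pos hrbm hrbp hrbb.
have y_x := y_mono_x u0_lbm rho0_lbm u0_le hr0p hFmin.
have tau_x := tau_mono_x ub_lbm rhob_lbm hubp hrbp hGmin.
have tau_t := tau_mono_t ub_lbm rhob_lbm hubp hrbp hGmin.
split.
  move=> x t1 t2 x0 t10; rewrite le_eqVlt => /predU1P[<-//|t12].
  by have [] := tau_t x t1 t2 x0 t10 t12.
split.
  move=> t x1 x2 t0 x10; rewrite le_eqVlt => /predU1P[<-//|x12].
  by have [] := tau_x t x1 x2 t0 x10 x12.
split; first by move=> x t1 t2 x0 t10 t12; have [] := tau_t x t1 t2 x0 t10 t12.
split; first by move=> t x1 x2 t0 x10 x12; have [] := tau_x t x1 x2 t0 x10 x12.
split.
  move=> t x1 x2 t0 x10; rewrite le_eqVlt => /predU1P[<-//|x12].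
  by have [] := y_x t x1 x2 t0 x10 x12.
split; first by move=> t x1 x2 t0 x10 x12; have [] := y_x t x1 x2 t0 x10 x12.
split.
  move=> t t0; rewrite /tau_low /tau_up.
  by rewrite (argminG0 ub_lbm rhob_lbm hubp hrbp hGmin t t0) inf1 sup1.
split; first exact: (y_low_lsc u0_lbm rho0_lbm hFmin).
split; first exact: (y_up_usc u0_lbm rho0_lbm u0_le hr0p hFmin).
split; first exact: (tau_low_lsc ub_lbm rhob_lbm hGmin).
exact: (tau_up_usc ub_lbm rhob_lbm hubp hrbp hGmin).
Qed.
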